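(* For $P\in\mathcal P(\mathcal X)$, $\Delta\ge0$ and $E\ge0$, the inverse of Blahut's exponent, $R_{\rm B}(E\mid\Delta,P):=\sup\{R\in[0,R_{\max}(\Delta)]: E_{\rm B}(R\mid\Delta,P)\le E\}$, satisfies $$R_{\rm B}(E\mid\Delta,P)=\inf_{\mu\ge0}\ \sup_{\nu\ge0}\Big[\mu E-\nu\Delta+\min_{p_Y\in\mathcal P(\mathcal Y)}G^{(\mu,\nu)}(p_Y\mid P)\Big].$$
   Context: $\mathcal X,\mathcal Y$ finite nonempty sets; $\mathcal P(\cdot)$ probability distributions. Distortion measure $d:\mathcal X\times\mathcal Y\to[0,\infty)$ with $\max_x\min_y d(x,y)=0$. Natural logs. $R(\Delta\mid q)$ is the rate-distortion function $\min\{I(q,V): \sum_{x,y}q(x)V(y|x)d(x,y)\le\Delta\}$ and $R_{\max}(\Delta)=\max_q R(\Delta\mid q)$. Blahut's exponent: $E_{\rm B}(R\mid\Delta,P)=\sup_{\rho\ge0}\Big[\rho R+\inf_{\nu\ge0}\Big\{\rho\nu\Delta-\min_{p_Y\in\mathcal P(\mathcal Y)}\log\sum_{x}P(x)\big(\sum_y p_Y(y)e^{-\nu d(x,y)}\big)^{-\rho}\Big\}\Big]$. For $\mu,\nu\ge0$: $G^{(\mu,\nu)}(p_Y\mid P)=\mu\log\sum_x P(x)\big(\sum_y p_Y(y)e^{-\nu d(x,y)}\big)^{-1/\mu}$ if $\mu>0$, and $G^{(0,\nu)}(p_Y\mid P)=-\log\min_{x}\sum_y p_Y(y)e^{-\nu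 d(x,y)}$. *)

From HB Require Import structures.
From mathcomp Require Import all_boot all_order all_algebra.
From mathcomp Require Import all_classical all_reals all_analysis.
Set Implicit Arguments. Unset Strict Implicit. Unset Printing Implicit Defensive.
Import Order.TTheory GRing.Theory Num.Theory.
Local Open Scope classical_set_scope.
Local Open Scope ring_scope.

Section RD.
Variables (R : realType) (X Y : finType).

Definition is_pmf (T : finType) (p : T -> R) : Prop :=
  (forall t, 0 <= p t) /\ \sum_(t : T) p t = 1.

(* stochastic matrix (channel) V(y|x) = V x y *)
Definition is_channel (V : X -> Y -> R) : Prop := forall x, is_pmf (V x).

Definition outdist (q : X -> R) (V : X -> Y -> R) (y : Y) : R :=
  \sum_(x : X) q x * V x y.

Definition mutinf (q : X -> R) (V : X -> Y -> R) : R :=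
  \sum_(x : X) \sum_(y : Y)
    (if q x * V x y == 0 then 0
     else q x * V x y * ln (V x y / outdist q V y)).

Definition expdist (d : X -> Y -> R) (q : X -> R) (V : X -> Y -> R) : R :=
  \sum_(x : X) \sum_(y : Y) q x * V x y * d x y.

(* rate-distortion function R(Delta | q) (the min, as an infimum) *)
Definition RDfun (d : X -> Y -> R) (Delta : R) (q : X -> R) : \bar R :=
  ereal_inf [set (mutinf q V)%:E | V in
               [set V | is_channel V /\ expdist d q V <= Delta]].

Definition Rmax (d : X -> Y -> R) (Delta : R) : \bar R :=
  ereal_sup [set RDfun d Delta q | q in [set q | is_pmf q]].

Definition tilt (d : X -> Y -> R) (nu : R) (pY : Y -> R) (x : X) : R :=
  \sum_(y : Y) pY y * expR (- (nu * d x y)).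

Definition EB (d : X -> Y -> R) (Rr Delta : R) (P : X -> R) : \bar R :=
  ereal_sup [set ((rho * Rr)%:E +
     ereal_inf [set ((rho * nu * Delta)%:E -
        ereal_inf [set (ln (\sum_(x : X) P x * (tilt d nu pY x) `^ (- rho)))%:E
                  | pY in [set pY | is_pmf pY]])%E
               | nu in [set nu : R | (0 <= nu)%R]])%E
   | rho in [set rho : R | (0 <= rho)%R]].

Definition RB (d : X -> Y -> R) (E Delta : R) (P : X -> R) : \bar R :=
  ereal_sup [set Rr%:E | Rr in
     [set Rr : R | 0 <= Rr /\ (Rr%:E <= Rmax d Delta)%E /\ (EB d Rr Delta P <= E%:E)%E]].

Definition Gfun (d : X -> Y -> R) (mu nu : R) (pY : Y -> R) (P : X -> R) : R :=
  if 0 < mu then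
    mu * ln (\sum_(x : X) P x * (tilt d nu pY x) `^ (- (1 / mu)))
  else
    - ln (fine (ereal_inf [set (tilt d nu pY x)%:E | x in [set: X]])).

Definition RBdual (d : X -> Y -> R) (E Delta : R) (P : X -> R) : \bar R :=
  ereal_inf [set
     ereal_sup [set ((mu * E - nu * Delta)%:E +
          ereal_inf [set (Gfun d mu nu pY P)%:E | pY in [set pY | is_pmf pY]])%E
       | nu in [set nu : R | (0 <= nu)%R]]
   | mu in [set mu : R | (0 <= mu)%R]].

End RD.

(* Both sides equal D := inf_{mu > 0} F(mu), where F(mu) is the supremum over nu in the
   bracket.  On the dual side F(mu) <= mu E + F(0), so the term mu = 0 does not lower the
   infimum.  On the primal side G^(mu,nu) = mu L(1/mu, nu), with L the log-moment occurring in
   Blahut's exponent, and the substitution rho = 1/mu shows that E_B(R) <= E exactly when R <= D;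
   hence R_B(E) = sup ([0, R_max(Delta)] ∩ [0, D]) and it remains to see D <= F(0) <= R_max(Delta).
   Since p |-> -ln sum_y p(y) e^{-nu d(x,y)} is convex, an approximate minimax theorem replaces
   min_p max_x of it by max_q min_p of its q-average, and weak duality for the rate-distortion
   problem of the source q bounds that average, minus nu Delta, by R(Delta | q). *)

From HB Require Import structures.
From mathcomp Require Import all_boot all_order all_algebra.
From mathcomp Require Import all_classical all_reals all_analysis.
From mathcomp Require Import ring lra.
Set Implicit Arguments.
Unset Strict Implicit.
Unset Printing Implicit Defensive.
Import Order.TTheory GRing.Theory Num.Theory.
Local Open Scope classical_set_scope.
Local Open Scope ring_scope.

Section RealFacts.
Context {R : realType}.
Implicit Types a b s u v w z : R.

Lemma ln_le_subr1 z : 0 < z -> ln z <= z - 1.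
Proof. by move=> z0; have := @le_ln1Dx _ (z - 1); rewrite [1 + _]addrC subrK; apply; lra. Qed.

Lemma subr_le_mul_ln_div v w : 0 <= v -> 0 < w -> v - w <= v * ln (v / w).
Proof.
move=> v0 w0; have [->|vn0] := eqVneq v 0; first by rewrite mul0r sub0r oppr_le0 ltW.
have {v0 vn0}v0 : 0 < v by rewrite lt_neqAle eq_sym vn0.
have := ler_wpM2l (ltW v0) (ln_le_subr1 (divr_gt0 w0 v0)).
have -> : ln (w / v) = - ln (v / w) by rewrite -lnV ?posrE ?divr_gt0 // invf_div.
have -> : v * (w / v - 1) = w - v by field; exact: lt0r_neq0.
lra.
Qed.

Lemma ln_concave a b s : 0 < a -> 0 < b -> 0 <= s <= 1 ->
  (1 - s) * ln a + s * ln b <= ln ((1 - s) * a + s * b).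
Proof.
move=> a0 b0 /andP[s0 s1].
by have := concave_ln (Itv01 s0 s1) b0 a0; rewrite !convRE /= addrC [X in _ <= ln X]addrC.
Qed.

Lemma expR_le_quad u : u <= 1 / 2 -> expR u <= 1 + u + 2 * u ^+ 2.
Proof.
move=> hu; have e1 : expR u * expR (- u) = 1 by rewrite -expRD subrr expR0.
have : expR u * (1 - u) <= 1.
  by rewrite -e1; apply: ler_wpM2l; [exact: ltW (expR_gt0 u)|have := expR_ge1Dx (- u); lra].
have : 1 <= (1 - u) * (1 + u + 2 * u ^+ 2).
  have : 0 <= u ^+ 2 * (1 - 2 * u) by apply: mulr_ge0; [exact: sqr_ge0|lra].
  rewrite expr2; nra.
have := expR_gt0 u; nra.
Qed.

Lemma powRN_ge1 a rho : 0 < a -> a <= 1 -> 0 <= rho -> 1 <= a `^ (- rho).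
Proof.
move=> a0 a1 rho0; rewrite /powR gt_eqF // -expR0 ler_expR mulNr oppr_ge0.
by rewrite mulr_ge0_le0 // ln_le0.
Qed.

End RealFacts.

Section Pmf.
Context {R : realType} {T : finType}.
Implicit Types (p q : T -> R) (f u : T -> R).

Lemma pmf_mix p q s : is_pmf p -> is_pmf q -> 0 <= s <= 1 ->
  is_pmf (fun t => (1 - s) * p t + s * q t).
Proof.
move=> [p0 p1] [q0 q1] /andP[s0 s1]; split.
  by move=> t; apply: addr_ge0; apply: mulr_ge0 => //; lra.
by rewrite big_split /= -!mulr_sumr p1 q1; ring.
Qed.

Lemma ler_term_sum f t0 : (forall t, 0 <= f t) -> f t0 <= \sum_t f t.
Proof. by move=> f0; rewrite (bigD1 t0) //= lerDl; apply: sumr_ge0. Qed.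

Lemma sumr_gt0 f (t0 : T) : (forall t, 0 < f t) -> 0 < \sum_t f t.
Proof. by move=> f0; apply: (lt_le_trans (f0 t0)); apply: ler_term_sum => t; exact: ltW. Qed.

Lemma ln_avg_expR_le q u c : is_pmf q -> (forall t, `|u t| <= c) -> c <= 1 / 2 ->
  ln (\sum_t q t * expR (u t)) <= \sum_t q t * u t + 2 * c ^+ 2.
Proof.
move=> [q0 q1] hu c12.
have avg_le : \sum_t q t * expR (u t) <= 1 + (\sum_t q t * u t + 2 * c ^+ 2).
  have -> : 1 + (\sum_t q t * u t + 2 * c ^+ 2) =
            \sum_t q t * (1 + u t + 2 * c ^+ 2).
    rewrite [RHS](eq_bigr (fun t => q t + q t * u t + 2 * c ^+ 2 * q t)); last by move=> t _; ring.
    by rewrite !big_split /= -mulr_sumr q1 mulr1 addrA.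
  apply: ler_sum => t _; apply: ler_wpM2l => //.
  have /ler_normlP[uc cu] := hu t.
  apply: le_trans (expR_le_quad _) _; first lra.
  rewrite lerD2l ler_wpM2l // !expr2; nra.
have avg_ge : 1 + \sum_t q t * u t <= \sum_t q t * expR (u t).
  rewrite -q1 -big_split /=; apply: ler_sum => t _.
  have := ler_wpM2l (q0 t) (expR_ge1Dx (u t)); lra.
have avg_u : - c <= \sum_t q t * u t.
  apply: le_trans (_ : \sum_t q t * (- c) <= _); first by rewrite -mulr_suml q1 mul1r.
  by apply: ler_sum => t _; have /ler_normlP[uc _] := hu t; apply: ler_wpM2l => //; lra.
have avg_gt0 : 0 < \sum_t q t * expR (u t).
  by apply: lt_le_trans avg_ge; lra.
have := ln_le_subr1 avg_gt0; lra.
Qed.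

End Pmf.

Section RealInf.
Context {R : realType} {T : Type}.
Variables (A : set T) (f : T -> R).

(* [fine] sends an infinite infimum to 0, hence the point of [A] and the lower bound
   assumed below. *)
Definition rinf : R := fine (ereal_inf [set (f x)%:E | x in A]).

Lemma ereal_inf_fin_num a b : A a -> (forall x, A x -> b <= f x) ->
  ereal_inf [set (f x)%:E | x in A] \is a fin_num.
Proof.
move=> Aa fb; rewrite fin_numE gt_eqF ?lt_eqF //.
  by apply: le_lt_trans (ltry (f a)); apply: ereal_inf_lbound; exists a.
apply: lt_le_trans (ltNyr b) _.
by apply: le_ereal_inf_tmp => _ [x Ax <-]; rewrite lee_fin; exact: fb.
Qed.

Lemma rinfE a b : A a -> (forall x, A x -> b <= f x) ->
  ereal_inf [set (f x)%:E | x in A] = rinf%:E.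
Proof. by move=> Aa fb; rewrite /rinf fineK //; exact: ereal_inf_fin_num Aa fb. Qed.

Lemma rinf_le b x : (forall x, A x -> b <= f x) -> A x -> rinf <= f x.
Proof.
by move=> fb Ax; rewrite -lee_fin -(rinfE Ax fb); apply: ereal_inf_lbound; exists x.
Qed.

Lemma rinf_glb a c : A a -> (forall x, A x -> c <= f x) -> c <= rinf.
Proof.
move=> Aa fc; rewrite -lee_fin -(rinfE Aa fc).
by apply: le_ereal_inf_tmp => _ [x Ax <-]; rewrite lee_fin; exact: fc.
Qed.

End RealInf.

Lemma rinfZ {R : realType} {T : Type} (A : set T) (f : T -> R) (k : R) (a : T) (b : R) :
  0 < k -> A a -> (forall x, A x -> b <= f x) ->
  rinf A (fun x => k * f x) = k * rinf A f.
Proof.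
move=> k0 Aa fb; have kfb x : A x -> k * b <= k * f x by move=> Ax; rewrite ler_pM2l // fb.
apply/eqP; rewrite eq_le; apply/andP; split.
  rewrite -ler_pdivrMl //; apply: rinf_glb Aa _ => x Ax.
  by rewrite ler_pdivrMl //; exact: rinf_le kfb Ax.
by apply: rinf_glb Aa _ => x Ax; rewrite ler_pM2l //; exact: rinf_le fb Ax.
Qed.

(* Witnesses: with e1 := min e 1, t := e1 / (3 (n + 1)) and s := t e1 / (12 (B + 1)^2). *)
Lemma minimax_step_sizes {R : realType} (B n e : R) : 0 <= B -> 0 <= n -> 0 < e ->
  exists t s, [/\ 0 < t, t * n <= e / 3, 0 < s <= 1, s * B <= t / 2 &
                  2 * (s * B) ^+ 2 / t <= s * e / 6].
Proof.
move=> B0 n0 e0; set e1 := Num.min e 1.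
have e1_gt0 : 0 < e1 by rewrite lt_min e0 ltr01.
have e1_le1 : e1 <= 1 by rewrite ge_min lexx orbT.
have e1_le : e1 <= e by rewrite ge_min lexx.
set t := e1 / (3 * (n + 1)); set K := (B + 1) ^+ 2; set s := t * e1 / (12 * K).
have t_gt0 : 0 < t by rewrite divr_gt0 //; lra.
have ht : 3 * (t * n) + 3 * t = e1 by rewrite /t; field; apply: lt0r_neq0; lra.
have tn0 : 0 <= t * n by rewrite mulr_ge0 // ltW.
have te1 : t * e1 <= 1 / 3 by apply: le_trans (_ : t * 1 <= _); [rewrite ler_pM2l|]; lra.
have K1 : 1 <= K by rewrite /K expr2; nra.
have BK : B ^+ 2 <= K by rewrite /K !expr2; nra.
have s_gt0 : 0 < s by apply: divr_gt0; [exact: mulr_gt0|lra].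
have hs : s * (12 * K) = t * e1 by rewrite divfK //; apply: lt0r_neq0; lra.
exists t, s; split=> //; first lra.
- by apply/andP; split=> //; nra.
- have : s * (B + 1) <= s * K by rewrite ler_pM2l // /K expr2; nra.
  nra.
- rewrite ler_pdivrMr // !expr2.
  have : s * s * (B * B) <= s * s * K by apply: ler_wpM2l; [nra|rewrite -expr2].
  have : s * t * e1 <= s * t * e by apply: ler_wpM2l => //; nra.
  nra.
Qed.

Lemma approx_argmin {R : realType} {T : Type} (A : set T) (f : T -> R) (a : T) (b eta : R) :
  A a -> (forall x, A x -> b <= f x) -> 0 < eta ->
  exists2 x, A x & forall y, A y -> f x <= f y + eta.
Proof.
move=> Aa fb eta0; set m := ereal_inf [set (f x)%:E | x in A].
have m_fin : m \is a fin_num := ereal_inf_fin_num Aa fb.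
have [_ [x Ax <-] fx_lt] := lb_ereal_inf_adherent eta0 m_fin.
exists x => // y Ay; rewrite -lee_fin EFinD; apply: le_trans (ltW fx_lt) _.
by rewrite leeD2r //; apply: ereal_inf_lbound; exists y.
Qed.

Section ApproxMinimax.
Context {R : realType} {X Y : finType}.
Variables (phi : X -> (Y -> R) -> R) (B : R) (x0 : X).
Hypothesis phi_bound : forall x p, is_pmf p -> 0 <= phi x p <= B.
Hypothesis phi_convex : forall x p p' s, is_pmf p -> is_pmf p' -> 0 <= s <= 1 ->
  phi x (fun y => (1 - s) * p y + s * p' y) <= (1 - s) * phi x p + s * phi x p'.

Section Softmax.
Variable t : R.
Hypothesis t_gt0 : 0 < t.

Definition softmax (p : Y -> R) := t * ln (\sum_x expR (phi x p / t)).

Definition gibbs (p : Y -> R) x := expR (phi x p / t) / \sum_x' expR (phi x' p / t).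

Lemma partition_gt0 p : 0 < \sum_x expR (phi x p / t).
Proof. by apply: (sumr_gt0 x0) => x; exact: expR_gt0. Qed.

Lemma gibbs_gt0 p x : 0 < gibbs p x.
Proof. by rewrite divr_gt0 ?expR_gt0 ?partition_gt0. Qed.

Lemma gibbs_pmf p : is_pmf (gibbs p).
Proof.
split=> [x|]; first exact/ltW/gibbs_gt0.
by rewrite -mulr_suml divff // gt_eqF // partition_gt0.
Qed.

Lemma phi_gibbsE p x : phi x p = softmax p + t * ln (gibbs p x).
Proof.
rewrite /softmax /gibbs ln_div ?posrE ?expR_gt0 ?partition_gt0 // expRK.
by field; exact: lt0r_neq0.
Qed.

Lemma le_softmax p x : phi x p <= softmax p.
Proof.
rewrite (phi_gibbsE p x) gerDl; apply: mulr_ge0_le0 (ltW t_gt0) _; apply: ln_le0.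
have [q0 <-] := gibbs_pmf p; exact: ler_term_sum.
Qed.

Lemma softmax_le_gibbs_avg p :
  softmax p - t * #|X|%:R <= \sum_x gibbs p x * phi x p.
Proof.
have [_ q1] := gibbs_pmf p.
have term x : gibbs p x * softmax p + t * (gibbs p x - 1) <= gibbs p x * phi x p.
  rewrite [in leRHS]phi_gibbsE [in leRHS]mulrDr lerD2l mulrCA ler_wpM2l ?(ltW t_gt0) //.
  by have := subr_le_mul_ln_div (ltW (gibbs_gt0 p x)) ltr01; rewrite divr1.
apply: le_trans (ler_sum _ (fun x _ => term x)).
rewrite big_split /= -mulr_suml -mulr_sumr sumrB q1 sumr_const.
have := t_gt0; lra.
Qed.

Lemma softmax_mix_le p0 p s : is_pmf p0 -> is_pmf p -> 0 <= s <= 1 ->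
  softmax (fun y => (1 - s) * p0 y + s * p y) <=
  softmax p0 + t * ln (\sum_x gibbs p0 x * expR (s * (phi x p - phi x p0) / t)).
Proof.
move=> hp0 hp hs.
have Z_gt0 : 0 < \sum_x gibbs p0 x * expR (s * (phi x p - phi x p0) / t).
  by apply: (sumr_gt0 x0) => x; exact: mulr_gt0 (gibbs_gt0 _ _) (expR_gt0 _).
rewrite /softmax -mulrDr ler_wpM2l ?(ltW t_gt0) // -lnM ?posrE ?partition_gt0 //.
rewrite ler_ln ?posrE ?partition_gt0 ?mulr_gt0 ?partition_gt0 //.
rewrite mulr_sumr; apply: ler_sum => x _.
have -> : (\sum_x' expR (phi x' p0 / t)) *
    (gibbs p0 x * expR (s * (phi x p - phi x p0) / t)) =
    expR (phi x p0 / t + s * (phi x p - phi x p0) / t).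
  by rewrite expRD /gibbs; field; exact: lt0r_neq0 (partition_gt0 p0).
rewrite ler_expR -mulrDl ler_pM2r ?invr_gt0 //.
have := phi_convex x hp0 hp hs; lra.
Qed.

Lemma gibbs_avg_incr_ge p0 p s eta : is_pmf p0 -> is_pmf p -> 0 <= s <= 1 ->
  s * B <= t / 2 -> (forall p', is_pmf p' -> softmax p0 <= softmax p' + eta) ->
  - eta - 2 * (s * B) ^+ 2 / t <= s * \sum_x gibbs p0 x * (phi x p - phi x p0).
Proof.
move=> hp0 hp hs sB p0_min; set D := \sum_x _.
pose u x := s * (phi x p - phi x p0) / t.
have /andP[s0 _] := hs.
have u_le x : `|u x| <= s * B / t.
  have /andP[a1 a2] := phi_bound x hp; have /andP[b1 b2] := phi_bound x hp0.
  rewrite /u mulrAC [s * B / t]mulrAC normrM ger0_norm ?divr_ge0 ?(ltW t_gt0) //.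
  by rewrite ler_wpM2l ?divr_ge0 ?(ltW t_gt0) // ler_norml; apply/andP; split; lra.
have c_le : s * B / t <= 1 / 2 by rewrite ler_pdivrMr //; lra.
have lnZ := ler_wpM2l (ltW t_gt0) (ln_avg_expR_le (gibbs_pmf p0) u_le c_le).
have uE : t * (\sum_x gibbs p0 x * u x + 2 * (s * B / t) ^+ 2) =
          s * D + 2 * (s * B) ^+ 2 / t.
  rewrite mulrDr mulr_sumr /D mulr_sumr; congr (_ + _).
    by apply: eq_bigr => x _; rewrite /u; field; exact: lt0r_neq0.
  by field; exact: lt0r_neq0.
have := softmax_mix_le hp0 hp hs.
have := p0_min _ (pmf_mix hp0 hp hs).
lra.
Qed.

End Softmax.

Variable pY0 : Y -> R.
Hypothesis pY0_pmf : is_pmf pY0.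

(* q is the Gibbs distribution of a near-minimiser p0 of the soft maximum: averaging against
   it loses at most t |X| at p0, and near-minimality of p0 along the segment towards p keeps
   the average at p within e / 3 of the one at p0. *)
Lemma approx_minimax M e :
  (forall p c, is_pmf p -> (forall x, phi x p <= c) -> M <= c) -> 0 < e ->
  exists2 q : X -> R, is_pmf q & forall p, is_pmf p -> M - e <= \sum_x q x * phi x p.
Proof.
move=> M_le e0; have B0 : 0 <= B by have /andP[] := phi_bound x0 pY0_pmf; lra.
have [t [s [t_gt0 tX /andP[s_gt0 s1] sB quad]]] := minimax_step_sizes B0 (ler0n _ #|X|) e0.
have softmax_ge0 (p : Y -> R) : is_pmf p -> 0 <= softmax t p.
  move=> hp; have := le_softmax t_gt0 p x0; have /andP[] := phi_bound x0 hp; lra.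
have eta_gt0 : 0 < s * e / 6 by apply: divr_gt0; [exact: mulr_gt0|lra].
have [p0 hp0 p0_min] := approx_argmin pY0_pmf softmax_ge0 eta_gt0.
exists (gibbs t p0) => [|p hp]; first exact: gibbs_pmf.
have avg0 := softmax_le_gibbs_avg t_gt0 p0.
have M_le_soft : M <= softmax t p0 by apply: M_le hp0 _ => x; exact: le_softmax.
have D_ge : - (e / 3) <= \sum_x gibbs t p0 x * (phi x p - phi x p0).
  have s01 : 0 <= s <= 1 by rewrite s1 ltW.
  have := gibbs_avg_incr_ge t_gt0 hp0 hp s01 sB p0_min.
  by move=> incr; rewrite -(ler_pM2l s_gt0); lra.
have -> : \sum_x gibbs t p0 x * phi x p =
          \sum_x gibbs t p0 x * phi x p0 + \sum_x gibbs t p0 x * (phi x p - phi x p0).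
  by rewrite -big_split /=; apply: eq_bigr => x _; ring.
lra.
Qed.

End ApproxMinimax.

(* The log-sum inequality v - w <= v ln (v / w) at w := Q e^c / T; the [if] is the
   convention 0 ln 0 = 0 of [mutinf]. *)
Lemma mutinf_term_ge {R : realType} (q v Q T c : R) :
  0 <= q -> 0 <= v -> q * v <= Q -> 0 < T ->
  q * (v * (c - ln T) + v - Q * expR c / T) <=
  (if q * v == 0 then 0 else q * v * ln (v / Q)).
Proof.
move=> q0 v0 qvQ T0; have Q0 : 0 <= Q := le_trans (mulr_ge0 q0 v0) qvQ.
have [/eqP|qv0] := eqVneq (q * v) 0.
  rewrite mulf_eq0 => /orP[/eqP->|/eqP->]; first by rewrite mul0r.
  rewrite mul0r !add0r mulrN oppr_le0 mulr_ge0 // divr_ge0 ?(ltW T0) //.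
  by rewrite mulr_ge0 ?expR_ge0.
have q_gt0 : 0 < q by rewrite lt_neqAle q0 andbT eq_sym; apply: contraNneq qv0 => ->; rewrite mul0r.
have v_gt0 : 0 < v by rewrite lt_neqAle v0 andbT eq_sym; apply: contraNneq qv0 => ->; rewrite mulr0.
have Q_gt0 : 0 < Q := lt_le_trans (mulr_gt0 q_gt0 v_gt0) qvQ.
set w := Q * expR c / T.
have w_gt0 : 0 < w by rewrite divr_gt0 ?mulr_gt0 ?expR_gt0.
have lnE : ln (v / w) = ln (v / Q) - c + ln T.
  rewrite /w !ln_div ?posrE ?divr_gt0 ?mulr_gt0 ?expR_gt0 //.
  by rewrite lnM ?posrE ?expR_gt0 // expRK; ring.
rewrite -mulrA ler_pM2l //.
have := subr_le_mul_ln_div (ltW v_gt0) w_gt0; rewrite lnE; lra.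
Qed.

Section RateDistortion.
Context {R : realType} {X Y : finType}.
Variable d : X -> Y -> R.
Hypothesis d_ge0 : forall x y, 0 <= d x y.

Lemma outdist_pmf (q : X -> R) (V : X -> Y -> R) :
  is_pmf q -> is_channel V -> is_pmf (outdist q V).
Proof.
move=> [q0 q1] hV; split.
  by move=> y; apply: sumr_ge0 => x _; apply: mulr_ge0 => //; case: (hV x).
rewrite /outdist exchange_big /= -q1; apply: eq_bigr => x _.
by rewrite -mulr_sumr; case: (hV x) => _ ->; rewrite mulr1.
Qed.

Definition dsum := \sum_x \sum_y d x y.

Lemma le_dsum x y : d x y <= dsum.
Proof.
apply: le_trans (ler_term_sum x _); first exact: (ler_term_sum y (d_ge0 x)).
by move=> x'; apply: sumr_ge0.
Qed.

Lemma expR_dsum_le_tilt nu pY x : 0 <= nu -> is_pmf pY ->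
  expR (- (nu * dsum)) <= tilt d nu pY x.
Proof.
move=> nu0 [p0 p1]; rewrite /tilt -[X in X <= _]mul1r -p1 mulr_suml.
apply: ler_sum => y _; apply: ler_wpM2l => //.
by rewrite ler_expR lerN2 ler_wpM2l // le_dsum.
Qed.

Lemma tilt_gt0 nu pY x : 0 <= nu -> is_pmf pY -> 0 < tilt d nu pY x.
Proof. by move=> nu0 hp; exact: lt_le_trans (expR_gt0 _) (expR_dsum_le_tilt x nu0 hp). Qed.

Lemma tilt_le1 nu pY x : 0 <= nu -> is_pmf pY -> tilt d nu pY x <= 1.
Proof.
move=> nu0 [p0 <-]; apply: ler_sum => y _; rewrite ler_piMr // expR_le1.
by rewrite oppr_le0 mulr_ge0.
Qed.

Lemma tilt_mix nu s (p p' : Y -> R) x :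
  tilt d nu (fun y => (1 - s) * p y + s * p' y) x =
  (1 - s) * tilt d nu p x + s * tilt d nu p' x.
Proof. by rewrite /tilt !mulr_sumr -big_split /=; apply: eq_bigr => y _; ring. Qed.

Lemma mutinf_ge_dual (q : X -> R) (V : X -> Y -> R) nu :
  0 <= nu -> is_pmf q -> is_channel V ->
  - (nu * expdist d q V) + \sum_x q x * - ln (tilt d nu (outdist q V) x) <= mutinf q V.
Proof.
move=> nu0 hq hV; have [q0 _] := hq.
set Q := outdist q V; set T := tilt d nu Q.
have T_gt0 x : 0 < T x by apply: tilt_gt0 => //; exact: outdist_pmf.
have rowE x : q x * (- (nu * \sum_y V x y * d x y) - ln (T x)) =
    \sum_y q x * (V x y * (- (nu * d x y) - ln (T x)) + V x y -
                  Q y * expR (- (nu * d x y)) / T x).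
  rewrite -mulr_sumr; congr (_ * _); have [_ V1] := hV x.
  rewrite [RHS](eq_bigr (fun y => - nu * (V x y * d x y) + - ln (T x) * V x y +
    1 * V x y + - (T x)^-1 * (Q y * expR (- (nu * d x y))))); last by move=> y _; ring.
  rewrite !big_split /= -!mulr_sumr V1.
  have -> : \sum_y Q y * expR (- (nu * d x y)) = T x by [].
  by field; exact: lt0r_neq0.
have -> : - (nu * expdist d q V) + \sum_x q x * - ln (T x) =
          \sum_x q x * (- (nu * \sum_y V x y * d x y) - ln (T x)).
  rewrite [RHS](eq_bigr (fun x => - nu * (q x * \sum_y V x y * d x y) + q x * - ln (T x))).
    rewrite big_split /= -mulr_sumr mulNr; congr (- (nu * _) + _).
    by apply: eq_bigr => x _; rewrite mulr_sumr; apply: eq_bigr => y _; ring.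
  by move=> x _; ring.
rewrite /mutinf; apply: ler_sum => x _; rewrite rowE; apply: ler_sum => y _.
have [V0 _] := hV x.
apply: mutinf_term_ge => //; rewrite /Q /outdist (bigD1 x) //= lerDl.
by apply: sumr_ge0 => x' _; apply: mulr_ge0 => //; case: (hV x').
Qed.

End RateDistortion.


Section Blahut.
Context {R : realType} {X Y : finType}.
Variable d : X -> Y -> R.
Hypothesis d_ge0 : forall x y, 0 <= d x y.
Variables (x0 : X) (y0 : Y) (P : X -> R).
Hypothesis P_pmf : is_pmf P.

Definition unif : Y -> R := fun=> #|Y|%:R^-1.

Lemma unif_pmf : is_pmf unif.
Proof.
split=> [y|]; first by rewrite invr_ge0.
rewrite sumr_const -[_ *+ _]mulr_natr mulVf // pnatr_eq0 -lt0n.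
by apply/card_gt0P; exists y0.
Qed.

Definition lnmoment rho nu pY := ln (\sum_x P x * tilt d nu pY x `^ (- rho)).

Lemma lnmoment_ge0 rho nu pY : 0 <= rho -> 0 <= nu -> is_pmf pY -> 0 <= lnmoment rho nu pY.
Proof.
move=> rho0 nu0 hp; have [P0 P1] := P_pmf; apply: ln_ge0; rewrite -P1.
apply: ler_sum => x _; rewrite ler_peMr //.
by apply: powRN_ge1 => //; [exact: tilt_gt0|exact: tilt_le1].
Qed.

Definition tilt_min nu pY := rinf [set: X] (tilt d nu pY).

Lemma tilt_min_le nu pY x : 0 <= nu -> is_pmf pY -> tilt_min nu pY <= tilt d nu pY x.
Proof. by move=> nu0 hp; apply: rinf_le => // ? _; exact: expR_dsum_le_tilt. Qed.

Lemma tilt_min_gt0 nu pY : 0 <= nu -> is_pmf pY -> 0 < tilt_min nu pY.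
Proof.
move=> nu0 hp; apply: lt_le_trans (expR_gt0 (- (nu * dsum d))) _.
by apply: (@rinf_glb _ _ _ _ x0) => // x _; exact: expR_dsum_le_tilt.
Qed.

Lemma Gfun0E nu pY : Gfun d 0 nu pY P = - ln (tilt_min nu pY).
Proof. by rewrite /Gfun ltxx. Qed.

Lemma GfunE mu nu pY : 0 < mu -> Gfun d mu nu pY P = mu * lnmoment (1 / mu) nu pY.
Proof. by move=> mu0; rewrite /Gfun mu0. Qed.

Lemma Gfun_ge0 mu nu pY : 0 <= mu -> 0 <= nu -> is_pmf pY -> 0 <= Gfun d mu nu pY P.
Proof.
move=> mu0 nu0 hp; have [mu_gt0|] := ltrP 0 mu.
  by rewrite GfunE // mulr_ge0 // lnmoment_ge0 // divr_ge0.
move=> mu_le0; have -> : mu = 0 by apply/eqP; rewrite eq_le mu_le0.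
rewrite Gfun0E oppr_ge0 ln_le0 //; apply: le_trans (tilt_min_le x0 nu0 hp) _.
exact: tilt_le1.
Qed.

Lemma Gfun_le_Gfun0 mu nu pY : 0 < mu -> 0 <= nu -> is_pmf pY ->
  Gfun d mu nu pY P <= Gfun d 0 nu pY P.
Proof.
move=> mu0 nu0 hp; rewrite GfunE // Gfun0E /lnmoment.
have [P0 P1] := P_pmf; set m := tilt_min nu pY.
have m_gt0 : 0 < m := tilt_min_gt0 nu0 hp.
have sum_gt0 : 0 < \sum_x P x * tilt d nu pY x `^ (- (1 / mu)).
  apply: lt_le_trans ltr01 (le_trans (_ : _ <= \sum_x P x) _); first by rewrite P1.
  apply: ler_sum => x _.
  rewrite ler_peMr //; apply: powRN_ge1; [exact: tilt_gt0|exact: tilt_le1|].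
  by rewrite divr_ge0 // ltW.
have sum_le : \sum_x P x * tilt d nu pY x `^ (- (1 / mu)) <= m `^ (- (1 / mu)).
  apply: le_trans (_ : _ <= \sum_x P x * m `^ (- (1 / mu))) _; last first.
    by rewrite -mulr_suml P1 mul1r.
  apply: ler_sum => x _; apply: ler_wpM2l => //.
  have tx_gt0 : 0 < tilt d nu pY x by exact: tilt_gt0.
  rewrite /powR !gt_eqF // ler_expR !mulNr lerN2 ler_wpM2l ?divr_ge0 ?(ltW mu0) //.
  by rewrite ler_ln ?posrE // tilt_min_le.
have ln_powm : mu * ln (m `^ (- (1 / mu))) = - ln m.
  by rewrite ln_powR; field; exact: lt0r_neq0.
rewrite -ler_ln ?posrE ?powR_gt0 // in sum_le.
by rewrite -ln_powm ler_wpM2l // ltW.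
Qed.

Definition Gmin mu nu := rinf [set pY | is_pmf pY] (fun pY => Gfun d mu nu pY P).

Definition Lmin rho nu := rinf [set pY | is_pmf pY] (lnmoment rho nu).

Lemma GinfE mu nu : 0 <= mu -> 0 <= nu ->
  ereal_inf [set (Gfun d mu nu pY P)%:E | pY in [set pY | is_pmf pY]] = (Gmin mu nu)%:E.
Proof. by move=> mu0 nu0; apply: (rinfE unif_pmf) => pY; exact: Gfun_ge0. Qed.

Lemma Gmin_ge0 mu nu : 0 <= mu -> 0 <= nu -> 0 <= Gmin mu nu.
Proof. by move=> mu0 nu0; apply: (rinf_glb unif_pmf) => pY; exact: Gfun_ge0. Qed.

Lemma Gmin_le mu nu pY : 0 <= mu -> 0 <= nu -> is_pmf pY -> Gmin mu nu <= Gfun d mu nu pY P.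
Proof. by move=> mu0 nu0; apply: rinf_le => pY'; exact: Gfun_ge0. Qed.

Lemma Gmin_le_Gmin0 mu nu : 0 < mu -> 0 <= nu -> Gmin mu nu <= Gmin 0 nu.
Proof.
move=> mu0 nu0; apply: (rinf_glb unif_pmf) => pY hp.
exact: le_trans (Gmin_le (ltW mu0) nu0 hp) (Gfun_le_Gfun0 mu0 nu0 hp).
Qed.

Lemma LminE rho nu : 0 <= rho -> 0 <= nu ->
  ereal_inf [set (lnmoment rho nu pY)%:E | pY in [set pY | is_pmf pY]] = (Lmin rho nu)%:E.
Proof. by move=> rho0 nu0; apply: (rinfE unif_pmf) => pY; exact: lnmoment_ge0. Qed.

Lemma Lmin_ge0 rho nu : 0 <= rho -> 0 <= nu -> 0 <= Lmin rho nu.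
Proof. by move=> rho0 nu0; apply: (rinf_glb unif_pmf) => pY; exact: lnmoment_ge0. Qed.

Lemma GminE mu nu : 0 < mu -> 0 <= nu -> Gmin mu nu = mu * Lmin (1 / mu) nu.
Proof.
move=> mu0 nu0; rewrite /Gmin (funext (fun pY => GfunE nu pY mu0)).
apply: (rinfZ (b := 0) mu0 unif_pmf) => pY hp.
by apply: lnmoment_ge0 => //; rewrite divr_ge0 // ltW.
Qed.

Variables (E Delta : R).
Hypothesis E_ge0 : 0 <= E.

Definition dualfun mu := ereal_sup [set ((mu * E - nu * Delta)%:E +
    ereal_inf [set (Gfun d mu nu pY P)%:E | pY in [set pY | is_pmf pY]])%E
  | nu in [set nu : R | 0 <= nu]].

Definition dual_pos := ereal_inf [set dualfun mu | mu in [set mu : R | 0 < mu]].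

Lemma dualfunE mu : 0 <= mu -> dualfun mu =
  ereal_sup [set (mu * E - nu * Delta + Gmin mu nu)%:E | nu in [set nu : R | 0 <= nu]].
Proof.
by move=> mu0; congr ereal_sup; apply: eq_imagel => nu nu0; rewrite GinfE // EFinD.
Qed.

Lemma dualfun_ub mu nu : 0 <= mu -> 0 <= nu ->
  ((mu * E - nu * Delta + Gmin mu nu)%:E <= dualfun mu)%E.
Proof. by move=> mu0 nu0; rewrite dualfunE //; apply: ereal_sup_ubound; exists nu. Qed.

Lemma dualfun_ge mu : 0 <= mu -> ((mu * E)%:E <= dualfun mu)%E.
Proof.
move=> mu0; apply: le_trans (dualfun_ub mu0 (lexx 0)).
by rewrite lee_fin mul0r subr0 lerDl Gmin_ge0.
Qed.

Lemma dualfun_le mu : 0 < mu -> (dualfun mu <= (mu * E)%:E + dualfun 0)%E.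
Proof.
move=> mu0; rewrite (dualfunE (ltW mu0)); apply: ge_ereal_sup => _ [nu nu0 <-].
apply: le_trans (leeD (lexx _) (dualfun_ub (lexx 0) nu0)); rewrite -EFinD lee_fin.
have := Gmin_le_Gmin0 mu0 nu0; lra.
Qed.

Lemma dual_pos_ge0 : (0 <= dual_pos)%E.
Proof.
apply: le_ereal_inf_tmp => _ [mu mu0 <-]; apply: le_trans (dualfun_ge (ltW mu0)).
by rewrite lee_fin mulr_ge0 // ltW.
Qed.

Lemma dual_pos_le_dualfun0 : (dual_pos <= dualfun 0)%E.
Proof.
apply/lee_addgt0Pr => e e0; have E1 : 0 < E + 1 := ltr_wpDl E_ge0 ltr01.
set mu := e / (E + 1); have mu0 : 0 < mu by rewrite divr_gt0.
apply: le_trans (_ : dual_pos <= dualfun mu)%E _; first by apply: ereal_inf_lbound; exists mu.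
apply: le_trans (dualfun_le mu0) _; rewrite addeC; apply: leeD => //; rewrite lee_fin.
by rewrite /mu mulrAC ler_pdivrMr // ler_pM2l //; lra.
Qed.

Lemma RBdual_dual_pos : RBdual d E Delta P = dual_pos.
Proof.
apply/eqP; rewrite eq_le; apply/andP; split.
  apply: le_ereal_inf_tmp => _ [mu mu0 <-]; apply: ereal_inf_lbound.
  by exists mu => //; exact: ltW.
apply: le_ereal_inf_tmp => _ [mu mu0 <-].
have [mu_gt0|mu_le0] := ltrP 0 mu; first by apply: ereal_inf_lbound; exists mu.
have -> : mu = 0 by apply/eqP; rewrite eq_le mu_le0; exact: mu0.
exact: dual_pos_le_dualfun0.
Qed.

Lemma EBE R0 : EB d R0 Delta P = ereal_sup [set ((rho * R0)%:E +
    ereal_inf [set (rho * nu * Delta - Lmin rho nu)%:E | nu in [set nu : R | (0 <= nu)%R]])%E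
  | rho in [set rho : R | (0 <= rho)%R]].
Proof.
rewrite /EB; congr ereal_sup; apply: eq_imagel => rho rho0.
congr (_ + _)%E; congr ereal_inf; apply: eq_imagel => nu nu0.
by have := LminE rho0 nu0; rewrite /lnmoment => ->; rewrite EFinB.
Qed.

(* The change of variables rho = 1 / mu between the dual and Blahut's exponent. *)
Lemma dual_termE mu nu : 0 < mu -> 0 <= nu ->
  mu * E - nu * Delta + Gmin mu nu = mu * (E - (1 / mu * nu * Delta - Lmin (1 / mu) nu)).
Proof. by move=> mu0 nu0; rewrite GminE //; field; exact: lt0r_neq0. Qed.

Lemma le_dual_pos_of_EB_le R0 : (EB d R0 Delta P <= E%:E)%E -> (R0%:E <= dual_pos)%E.
Proof.
move=> EB_le; apply: le_ereal_inf_tmp => _ [mu mu0 <-]; rewrite leNgt; apply/negP => D_lt.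
have D_fin : dualfun mu \is a fin_num.
  rewrite fin_numE gt_eqF ?lt_eqF //; first exact: lt_trans D_lt (ltry _).
  exact: lt_le_trans (ltNyr _) (dualfun_ge (ltW mu0)).
set D := fine (dualfun mu); rewrite -(fineK D_fin) lte_fin -/D in D_lt.
set rho := 1 / mu; have rho0 : 0 < rho by rewrite divr_gt0.
have inner_ge : ((E - rho * D)%:E <=
    ereal_inf [set (rho * nu * Delta - Lmin rho nu)%:E | nu in [set nu : R | (0 <= nu)%R]])%E.
  apply: le_ereal_inf_tmp => _ [nu nu0 <-]; rewrite lee_fin.
  have := dualfun_ub (ltW mu0) nu0; rewrite -(fineK D_fin) lee_fin dual_termE // -/rho -/D.
  move=> /(ler_wpM2l (ltW rho0)); rewrite mulrA (_ : rho * mu = 1) ?mul1r; first lra.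
  by rewrite /rho mul1r mulVf // gt_eqF.
have : ((rho * R0)%:E + (E - rho * D)%:E <= E%:E)%E.
  apply: le_trans EB_le; rewrite EBE; apply: le_trans (leeD (lexx _) inner_ge) _.
  by apply: ereal_sup_ubound; exists rho => //; exact: ltW.
rewrite -EFinD lee_fin; have := ltr_pM2l rho0 D R0; rewrite D_lt; lra.
Qed.

Lemma EB_le_of_le_dual_pos R0 : (R0%:E <= dual_pos)%E -> (EB d R0 Delta P <= E%:E)%E.
Proof.
move=> R0_le; rewrite EBE; apply: ge_ereal_sup => _ [rho rho0 <-].
have [rho_gt0|rho_le0] := ltrP 0 rho; last first.
  have -> : rho = 0 by apply/eqP; rewrite eq_le rho_le0; exact: rho0.
  apply: le_trans (leeD (lexx _) (ereal_inf_lbound _)) _; first by exists 0; first exact: lexx.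
  rewrite -EFinD lee_fin !mul0r add0r; have := Lmin_ge0 (lexx 0) (lexx 0); have := E_ge0; lra.
apply/lee_addgt0Pr => e e0.
set mu := 1 / rho; have mu0 : 0 < mu by rewrite divr_gt0.
have rhoE : 1 / mu = rho by rewrite /mu; field; exact: lt0r_neq0.
have R0_le_D : (R0%:E <= dualfun mu)%E.
  by apply: le_trans R0_le _; apply: ereal_inf_lbound; exists mu.
rewrite (dualfunE (ltW mu0)) in R0_le_D.
have lt_R0 : ((R0 - e / rho)%:E < R0%:E)%E by rewrite lte_fin; have := divr_gt0 e0 rho_gt0; lra.
have [_ [nu nu0 <-]] := ereal_sup_gt (lt_le_trans lt_R0 R0_le_D).
rewrite lte_fin dual_termE // rhoE -(ltr_pM2l rho_gt0) => lt_nu.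
have e1 : rho * (R0 - e / rho) = rho * R0 - e by field; exact: lt0r_neq0.
have e2 : rho * (mu * (E - (rho * nu * Delta - Lmin rho nu))) =
          E - (rho * nu * Delta - Lmin rho nu) by rewrite /mu; field; exact: lt0r_neq0.
rewrite e1 e2 in lt_nu.
apply: le_trans (leeD (lexx _) (ereal_inf_lbound _)) _; first by exists nu.
rewrite -!EFinD lee_fin; lra.
Qed.

Lemma dualfun0_le_Rmax : (dualfun 0 <= Rmax d Delta)%E.
Proof.
rewrite (dualfunE (lexx 0)); apply: ge_ereal_sup => _ [nu nu0 <-].
apply/lee_addgt0Pr => e e0.
pose phi x p := - ln (tilt d nu p x).
have phi_bound x p : is_pmf p -> 0 <= phi x p <= nu * dsum d.
  move=> hp; rewrite /phi oppr_ge0 ln_le0 ?tilt_le1 //= lerNl.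
  by rewrite -[leLHS]expRK ler_ln ?posrE ?expR_gt0 ?tilt_gt0 // expR_dsum_le_tilt.
have phi_convex x p p' s : is_pmf p -> is_pmf p' -> 0 <= s <= 1 ->
    phi x (fun y => (1 - s) * p y + s * p' y) <= (1 - s) * phi x p + s * phi x p'.
  move=> hp hp' hs; rewrite /phi tilt_mix.
  have := ln_concave (tilt_gt0 d_ge0 x nu0 hp) (tilt_gt0 d_ge0 x nu0 hp') hs; lra.
have Gmin0_le p c : is_pmf p -> (forall x, phi x p <= c) -> Gmin 0 nu <= c.
  move=> hp hc; apply: le_trans (Gmin_le (lexx 0) nu0 hp) _.
  rewrite Gfun0E lerNl -[leLHS]expRK ler_ln ?posrE ?expR_gt0 ?tilt_min_gt0 //.
  apply: (@rinf_glb _ _ _ _ x0) => // x _; have := hc x; rewrite /phi lerNl.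
  by move=> h; rewrite -[leRHS]lnK ?posrE ?tilt_gt0 // ler_expR.
have [q q_pmf q_avg] := approx_minimax x0 phi_bound phi_convex unif_pmf Gmin0_le e0.
have : ((- (nu * Delta) + Gmin 0 nu - e)%:E <= Rmax d Delta)%E.
  apply: le_trans (_ : _ <= RDfun d Delta q)%E _; last by apply: ereal_sup_ubound; exists q.
  apply: le_ereal_inf_tmp => _ [V [hV V_dist] <-]; rewrite lee_fin.
  apply: le_trans (mutinf_ge_dual d_ge0 nu0 q_pmf hV).
  have := q_avg _ (outdist_pmf q_pmf hV).
  have : nu * expdist d q V <= nu * Delta by apply: ler_wpM2l.
  rewrite /phi; lra.
have -> : ((0 * E - nu * Delta + Gmin 0 nu)%:E = (- (nu * Delta) + Gmin 0 nu - e)%:E + e%:E)%E.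
  by rewrite -EFinD; congr EFin; ring.
by move=> h; apply: leeD.
Qed.

Lemma RB_dual_pos : RB d E Delta P = dual_pos.
Proof.
have dual_le_Rmax : (dual_pos <= Rmax d Delta)%E.
  exact: le_trans dual_pos_le_dualfun0 dualfun0_le_Rmax.
have RB_ge r : 0 <= r -> (r%:E <= dual_pos)%E -> (r%:E <= RB d E Delta P)%E.
  move=> r0 r_le; apply: ereal_sup_ubound; exists r => //.
  by split=> //; split; [exact: le_trans r_le dual_le_Rmax|exact: EB_le_of_le_dual_pos].
apply/eqP; rewrite eq_le; apply/andP; split.
  by apply: ge_ereal_sup => _ [r [_ [_ EB_le]] <-]; exact: le_dual_pos_of_EB_le.
have [[r Dr]|Dinf] : (exists r, dual_pos = r%:E) \/ dual_pos = +oo%E.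
  by move: dual_pos_ge0; case: dual_pos => [r _| |] //; [left; exists r|right].
  by rewrite Dr; apply: RB_ge; rewrite ?Dr // -lee_fin -Dr dual_pos_ge0.
rewrite Dinf leye_eq; apply/eqP/eq_infty => r.
apply: le_trans (RB_ge (Num.max r 0) _ _); first by rewrite lee_fin le_max lexx.
  by rewrite le_max lexx orbT.
by rewrite Dinf leey.
Qed.

End Blahut.

Theorem theorem2 (R : realType) (X Y : finType) (d : X -> Y -> R)
  (hX : (0 < #|X|)%N) (hY : (0 < #|Y|)%N)
  (hd0 : forall x y, 0 <= d x y)
  (hd : ereal_sup [set ereal_inf [set (d x y)%:E | y in [set: Y]]
                  | x in [set: X]] = 0%E)
  (P : X -> R) (hP : is_pmf P) (Delta E : R)
  (hDelta : 0 <= Delta) (hE : 0 <= E) :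
  RB d E Delta P = RBdual d E Delta P.
Proof.
have /card_gt0P [x0 _] := hX; have /card_gt0P [y0 _] := hY.
by rewrite (RB_dual_pos hd0 x0 y0 hP Delta hE) (RBdual_dual_pos hd0 x0 y0 hP Delta hE).
Qed.
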